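(* Let $(I,T)$ be a transition system with transition relation given as a finite set of top-level conjuncts $T=\{T_1,\dots,T_n\}$, and let $P$ be a safety property with $(I,T)\vdash P$. Consider the following procedure: set $S\leftarrow T$; then for each conjunct $x$ of $T$ in turn (in some order), if $(I,S\setminus\{x\})\vdash P$ then set $S\leftarrow S\setminus\{x\}$; finally return $S$. Then the returned set is a minimal inductive validity core for $(I,T)\vdash P$.
   Context: A transition system $(I,T)$ over a state space $\Sigma$ consists of an initial-state predicate $I:\Sigma\to\mathit{bool}$ and a transition predicate $T:\Sigma\times\Sigma\to\mathit{bool}$. The reachable-state predicate $R$ of $(I,T)$ is the smallest predicate with $\forall s.\, I(s)\Rightarrow R(s)$ and $\forall s,s'.\, R(s)\land T(s,s')\Rightarrow R(s')$. A safety property is a predicate $P:\Sigma\to\mathit{bool}$; we write $(I,T)\vdash P$ if $\forall s.\,R(s)\Rightarrow P(s)$. The transition relation is assumed to be a top-level conjunction $T_1\land\cdots\land T_n$, and $T$ is identified with the set of its top-level conjuncts; for $S\subseteq T$, $S$ also denotes the transition relation given by the conjunction of its elements, and $S\setminus\{x\}$ is $S$ with the conjunct $x$ removed. Given $(I,T)\vdash P$, a set $S\subseteq T$ is an inductive validity core (IVC) for $(I,T)\vdash P$ iff $(I,S)\vdash P$; an IVC $S$ is minimal iff there is no IVC $M$ for $(I,T)\vdash P$ with $M\subsetneq S$. The checks $(I,S\setminus\{x\})\vdash P$ are performed by an exact oracle (the procedure is considered as a mathematical function of its input). *)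

From mathcomp Require Import all_boot.
From Stdlib Require Import ClassicalEpsilon.
Set Implicit Arguments. Unset Strict Implicit. Unset Printing Implicit Defensive.

(* Conjuncts are indexed by a finite type J; conjunct j is the transition
   predicate trans j : Σ -> Σ -> Prop.  The full relation T is [set: J]. *)

Definition conj_rel (Sigma : Type) (J : finType)
  (trans : J -> Sigma -> Sigma -> Prop) (S : {set J}) : Sigma -> Sigma -> Prop :=
  fun s s' => forall j, j \in S -> trans j s s'.

Inductive reachable (Sigma : Type) (I : Sigma -> Prop)
    (Tr : Sigma -> Sigma -> Prop) : Sigma -> Prop :=
| reach_init : forall s, I s -> reachable I Tr s
| reach_step : forall s s', reachable I Tr s -> Tr s s' -> reachable I Tr s'.

Definition proves (Sigma : Type) (I : Sigma -> Prop)
  (Tr : Sigma -> Sigma -> Prop) (P : Sigma -> Prop) : Prop :=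
  forall s, reachable I Tr s -> P s.

Definition is_IVC (Sigma : Type) (J : finType) (I : Sigma -> Prop)
  (trans : J -> Sigma -> Sigma -> Prop) (P : Sigma -> Prop) (S : {set J}) : Prop :=
  proves I (conj_rel trans S) P.

Definition is_minimal_IVC (Sigma : Type) (J : finType) (I : Sigma -> Prop)
  (trans : J -> Sigma -> Sigma -> Prop) (P : Sigma -> Prop) (S : {set J}) : Prop :=
  is_IVC I trans P S /\
  forall M : {set J}, M \proper S -> ~ is_IVC I trans P M.

Definition oracle (Q : Prop) : bool :=
  if excluded_middle_informative Q then true else false.

Definition ivc_step (Sigma : Type) (J : finType) (I : Sigma -> Prop)
  (trans : J -> Sigma -> Sigma -> Prop) (P : Sigma -> Prop)
  (S : {set J}) (x : J) : {set J} :=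
  if oracle (is_IVC I trans P (S :\ x)) then S :\ x else S.

Definition ivc_proc (Sigma : Type) (J : finType) (I : Sigma -> Prop)
  (trans : J -> Sigma -> Sigma -> Prop) (P : Sigma -> Prop)
  (order : seq J) : {set J} :=
  foldl (ivc_step I trans P) [set: J] order.

From mathcomp Require Import all_boot.
From Stdlib Require Import ClassicalEpsilon.

Set Implicit Arguments.
Unset Strict Implicit.
Unset Printing Implicit Defensive.

(* Removing conjuncts only enlarges the transition relation, so being an IVC is
   upward closed.  Hence a conjunct x that the procedure keeps, because
   [S :\ x] failed the check for the current S, stays necessary for every later,
   smaller S.  As every conjunct is examined, the final S is an IVC none of
   whose elements can be dropped, and by upward closure no proper subset of it
   is an IVC. *)

Lemma oracleP (Q : Prop) : reflect Q (oracle Q).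
Proof. by rewrite /oracle; case: excluded_middle_informative => HQ; constructor. Qed.

Lemma reachable_sub (Sigma : Type) (I : Sigma -> Prop)
    (Tr1 Tr2 : Sigma -> Sigma -> Prop) :
  (forall s s', Tr1 s s' -> Tr2 s s') ->
  forall s, reachable I Tr1 s -> reachable I Tr2 s.
Proof.
move=> sTr s; elim=> [s0 Is0|s0 s1 _ IH Tr01]; first exact: reach_init.
exact: reach_step IH (sTr _ _ Tr01).
Qed.

Section IVCProcedure.

Variables (Sigma : Type) (J : finType) (I : Sigma -> Prop)
  (trans : J -> Sigma -> Sigma -> Prop) (P : Sigma -> Prop).

Local Notation IVC := (is_IVC I trans P).
Local Notation step := (ivc_step I trans P).

Lemma is_IVC_subset {A B : {set J}} : A \subset B -> IVC A -> IVC B.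
Proof.
move=> sAB IVC_A s Rs; apply: IVC_A; apply: reachable_sub Rs => s1 s2 TrB j jA.
exact/TrB/(subsetP sAB).
Qed.

Lemma ivc_step_sub (S : {set J}) (x : J) : step S x \subset S.
Proof. by rewrite /ivc_step; case: oracleP => _; [apply: subsetDl|]. Qed.

Lemma ivc_step_IVC (S : {set J}) (x : J) : IVC S -> IVC (step S x).
Proof. by rewrite /ivc_step; case: oracleP. Qed.

Lemma ivc_step_kept (S : {set J}) (x : J) :
  x \in step S x -> ~ IVC (step S x :\ x).
Proof. by rewrite /ivc_step; case: oracleP => [_|//]; rewrite setD11. Qed.

Lemma foldl_ivc_step_sub (s : seq J) (S : {set J}) : foldl step S s \subset S.
Proof.
elim: s S => [|y s IH] S /=; first exact: subxx.
exact: subset_trans (IH _) (ivc_step_sub S y).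
Qed.

Lemma foldl_ivc_step_IVC (s : seq J) (S : {set J}) :
  IVC S -> IVC (foldl step S s).
Proof. by elim: s S => [|y s IH] S //= IVC_S; apply/IH/ivc_step_IVC. Qed.

Lemma foldl_ivc_step_necessary (s : seq J) (S : {set J}) (x : J) :
  x \in s -> x \in foldl step S s -> ~ IVC (foldl step S s :\ x).
Proof.
elim: s S => [|y s IH] S //=.
rewrite in_cons => /predU1P [<- | xs] xR; last exact: IH.
have sRS := foldl_ivc_step_sub s (step S x).
move=> /(is_IVC_subset (setSD _ sRS)); apply: ivc_step_kept.
exact: subsetP sRS x xR.
Qed.

End IVCProcedure.

Theorem lemma2 (Sigma : Type) (J : finType) (I : Sigma -> Prop)
  (trans : J -> Sigma -> Sigma -> Prop) (P : Sigma -> Prop) (order : seq J) :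
  perm_eq order (enum J) ->
  is_IVC I trans P [set: J] ->
  is_minimal_IVC I trans P (ivc_proc I trans P order).
Proof.
move=> order_enum IVC_T; split; first exact: foldl_ivc_step_IVC.
move=> M /properP [sMR [x xR xM]] IVC_M.
have x_order : x \in order by rewrite (perm_mem order_enum) mem_enum.
apply: (foldl_ivc_step_necessary x_order xR); apply: is_IVC_subset IVC_M.
apply/subsetP => y yM; rewrite in_setD1 (subsetP sMR _ yM) andbT.
by apply: contraNneq xM => <-.
Qed.
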